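(* Suppose the collective choice problem $\mathcal C$ satisfies Generic Finite Alternatives and the generalized amendment procedure is rich. For any game with $T$ rounds and initial default $x^0$, the unique equilibrium outcome is $\phi_{\mathcal D}^T(x^0)$. Consequently, for $T\ge |X|-1$, a policy is an equilibrium outcome (for some initial default) if and only if it belongs to $E_{\mathcal D}$.
   Context: Voters $N=\{1,\dots,n\}$ ($n$ any positive integer) and a non-voting agenda setter $A$ choose from a finite policy space $X$; each player has a strict (antisymmetric), complete, transitive preference $\succsim_i$ with utility $u_i$ (Generic Finite Alternatives). A voting rule is any collection $\mathcal D\subseteq 2^N$ of winning coalitions; a proposal passes iff all voters in some $D\in\mathcal D$ approve it. Generalized amendment procedure with $T$ rounds: initial default $x^0$; in round $t$ the agenda setter proposes $\hat a^t=(a^t,i)$ from a feasible set $X(h)\subseteq X\times\{0,1\}$ that may depend on the history $h$; if it passes and $i=0$, $a^t$ becomes the next default; if it passes and $i=1$ (adjournment provision), deliberation ends and $a^t$ is implemented; if rejected, the default is unchanged; if no adjournment occurs, the default after round $T$ is implemented. The procedure is rich if at every history $h$, $X(h)\subseteq X\times\{0\}$ or $X(h)\subseteq X\times\{1\}$. Equilibrium: subgame perfect equilibrium with as-if-pivotal voting. Define $M_{\mathcal D}(x)=\{y\in X: y=x \text{ or } \exists D\in\mathcal D \text{ with } y\succ_i x\ \forall i\in D\}$, $\{\phi_{\mathcal D}(x)\}=\arg\max_{y\in M_{\mathcal D}(x)}u_A(y)$, $\phi^T_{\mathcal D}$ its $T$-fold iterate, and $E_{\mathcal D}=\{x\in X: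 x=\phi_{\mathcal D}(x)\}$. *)

From mathcomp Require Import all_boot.
Set Implicit Arguments. Unset Strict Implicit. Unset Printing Implicit Defensive.

(* A proposal (a, i) : policy a with adjournment flag i (true = 1 = adjournment). *)
Definition proposal (X : finType) := (X * bool)%type.
(* A history entry: a proposal and whether it passed. *)
Definition entry (X : finType) := (proposal X * bool)%type.
Definition history (X : finType) := seq (entry X).

Definition passes (n : nat) (D : {set {set 'I_n}}) (v : 'I_n -> bool) : bool :=
  [exists C in D, C \subset [set i | v i]].

Definition Mset (n : nat) (X : finType) (u : 'I_n -> X -> nat)
  (D : {set {set 'I_n}}) (x : X) : pred X :=
  fun y => (y == x) || [exists C in D, [forall i in C, u i x < u i y]].

(* phi_D(x) : the agenda setter's favourite element of M_D(x) (unique when uA is injective). *)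
Definition phi (n : nat) (X : finType) (uA : X -> nat) (u : 'I_n -> X -> nat)
  (D : {set {set 'I_n}}) (x : X) : X :=
  [arg max_(y > x | Mset u D x y) uA y].

Definition E_D (n : nat) (X : finType) (uA : X -> nat) (u : 'I_n -> X -> nat)
  (D : {set {set 'I_n}}) : pred X := fun x => phi uA u D x == x.

Definition dflt (X : finType) (x0 : X) (h : history X) : X :=
  foldl (fun x (e : entry X) => if e.2 then e.1.1 else x) x0 h.

Definition setter_strategy (X : finType) := history X -> proposal X.
Definition voter_strategies (n : nat) (X : finType) := 'I_n -> history X -> proposal X -> bool.

(* Outcome of the subgame starting at the setter's decision node h with k rounds left. *)
Fixpoint outD (n : nat) (X : finType) (D : {set {set 'I_n}}) (x0 : X)
  (sA : setter_strategy X) (sV : voter_strategies n X) (k : nat) (h : history X) : X :=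
  match k with
  | 0 => dflt x0 h
  | k'.+1 =>
      let a := sA h in
      let p := passes D (fun i => sV i h a) in
      if p && a.2 then a.1 else outD D x0 sA sV k' (rcons h (a, p))
  end.

(* Outcome of the subgame starting at the voting node (h, a), with k rounds left after this one. *)
Definition outV (n : nat) (X : finType) (D : {set {set 'I_n}}) (x0 : X)
  (sA : setter_strategy X) (sV : voter_strategies n X) (k : nat) (h : history X)
  (a : proposal X) : X :=
  let p := passes D (fun i => sV i h a) in
  if p && a.2 then a.1 else outD D x0 sA sV k (rcons h (a, p)).

Definition dev (n : nat) (X : finType) (sV : voter_strategies n X) (i : 'I_n)
  (s : history X -> proposal X -> bool) : voter_strategies n X :=
  fun j => if j == i then s else sV j.

Inductive valid (X : finType) (Xf : history X -> {set proposal X}) : history X -> Prop :=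
| valid_nil : valid Xf [::]
| valid_rcons h a b : valid Xf h -> a \in Xf h -> ~~ (b && a.2) ->
    valid Xf (rcons h (a, b)).

Definition feasibleA (X : finType) (Xf : history X -> {set proposal X})
  (sA : setter_strategy X) : Prop :=
  forall h, valid Xf h -> sA h \in Xf h.

Definition gen_amendment (X : finType) (Xf : history X -> {set proposal X}) : Prop :=
  forall h (x : X), exists b, (x, b) \in Xf h.

Definition rich (X : finType) (Xf : history X -> {set proposal X}) : Prop :=
  forall h, Xf h \subset [set a | ~~ a.2] \/ Xf h \subset [set a | a.2].

(* Subgame perfect equilibrium with as-if-pivotal voting, game with T rounds and initial default x0. *)
Definition is_equilibrium (n : nat) (X : finType) (uA : X -> nat) (u : 'I_n -> X -> nat)
  (D : {set {set 'I_n}}) (Xf : history X -> {set proposal X}) (T : nat) (x0 : X)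
  (sA : setter_strategy X) (sV : voter_strategies n X) : Prop :=
  feasibleA Xf sA /\
  (forall h, valid Xf h -> size h < T ->
     (forall sA', feasibleA Xf sA' ->
        uA (outD D x0 sA' sV (T - size h) h) <= uA (outD D x0 sA sV (T - size h) h)) /\
     (forall i s,
        u i (outD D x0 sA (dev sV i s) (T - size h) h) <= u i (outD D x0 sA sV (T - size h) h))) /\
  (forall h a, valid Xf h -> size h < T -> a \in Xf h ->
     (forall sA', feasibleA Xf sA' ->
        uA (outV D x0 sA' sV (T - size h).-1 h a) <= uA (outV D x0 sA sV (T - size h).-1 h a)) /\
     (forall i s,
        u i (outV D x0 sA (dev sV i s) (T - size h).-1 h a)
          <= u i (outV D x0 sA sV (T - size h).-1 h a)) /\
     (* as-if-pivotal voting *)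
     (forall i,
        let po := if a.2 then a.1 else outD D x0 sA sV (T - size h).-1 (rcons h (a, true)) in
        let fo := outD D x0 sA sV (T - size h).-1 (rcons h (a, false)) in
        (u i fo < u i po -> sV i h a) /\ (u i po < u i fo -> ~~ sV i h a))).

Definition eq_outcome (n : nat) (X : finType) (D : {set {set 'I_n}}) (T : nat) (x0 : X)
  (sA : setter_strategy X) (sV : voter_strategies n X) : X :=
  outD D x0 sA sV T [::].

From mathcomp Require Import all_boot.
Set Implicit Arguments. Unset Strict Implicit. Unset Printing Implicit Defensive.

(* Backward induction on the number k of remaining rounds: every equilibrium
   subgame with default x and k rounds left ends at phi^k(x).  If a proposal
   fails, the default stays x and the continuation gives phi^k(x) =: z; voting
   as if pivotal with strict preferences makes the vote's result a member of
   M_D(z), and makes any proposal whose continuation lies in M_D(z) pass.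
   Richness always lets the setter obtain phi(z), the best element of M_D(z),
   so he does.  Conversely, that proposal together with sincere voting is an
   equilibrium.  Along x, phi(x), phi^2(x), ... the setter's utility increases
   strictly until a fixed point is reached, so phi^T(x) is in E_D once
   T >= |X| - 1, and the points of E_D are their own outcomes. *)

Section Preferences.

Variables (n : nat) (X : finType) (uA : X -> nat) (u : 'I_n -> X -> nat).
Variable D : {set {set 'I_n}}.

Local Notation f := (phi uA u D).

Lemma passesP (v : 'I_n -> bool) :
  reflect (exists2 C, C \in D & forall i, i \in C -> v i) (passes D v).
Proof.
apply: (iffP existsP) => [[C /andP[CD /subsetP sub]] | [C CD allv]].
  by exists C => // i /sub; rewrite inE.
by exists C; rewrite CD; apply/subsetP => i /allv; rewrite inE.
Qed.

Lemma passes_mono (v w : 'I_n -> bool) :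
  (forall i, v i -> w i) -> passes D v -> passes D w.
Proof. by move=> vw /passesP[C CD allv]; apply/passesP; exists C => // i /allv/vw. Qed.

Lemma MsetP x y :
  reflect (y = x \/ exists2 C, C \in D & forall i, i \in C -> u i x < u i y)
          (Mset u D x y).
Proof.
apply: (iffP orP) => [[/eqP-> | /existsP[C /andP[CD /forallP lt]]] | [-> | [C CD lt]]].
- by left.
- by right; exists C => // i iC; move/implyP: (lt i); apply.
- by left.
- by right; apply/existsP; exists C; rewrite CD; apply/forallP => i; apply/implyP/lt.
Qed.

Lemma Mset_refl x : Mset u D x x.
Proof. by apply/MsetP; left. Qed.

Lemma phi_in x : Mset u D x (f x).
Proof. by rewrite /phi; case: arg_maxnP => //; apply: Mset_refl. Qed.

Lemma phi_max x y : Mset u D x y -> uA y <= uA (f x).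
Proof. by rewrite /phi => Mxy; case: arg_maxnP => [|z _]; [apply: Mset_refl | apply]. Qed.

Lemma phi_ge x : uA x <= uA (f x).
Proof. exact/phi_max/Mset_refl. Qed.

Lemma iter_phi_mono x : {homo (fun k => uA (iter k f x)) : i j / i <= j}.
Proof. by apply: homo_leq => [//|? ? ?|?]; [apply: leq_trans | apply: phi_ge]. Qed.

Lemma sincere_vote_optimal (v w : 'I_n -> bool) i p q :
  v i = (u i q < u i p) -> (forall j, j != i -> w j = v j) ->
  u i (if passes D w then p else q) <= u i (if passes D v then p else q).
Proof.
move=> sincere others; case: (boolP (v i)) => vi.
- have wv j : w j -> v j by case: (eqVneq j i) => [-> | /others ->].
  have [pv | npv] := boolP (passes D v); last by rewrite (negbTE (contra (passes_mono wv) npv)).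
  by case: (passes D w) => //; rewrite ltnW // -sincere.
- have vw j : v j -> w j by case: (eqVneq j i) => [-> | /others ->]; rewrite ?(negPf vi).
  have [pv | npv] := boolP (passes D v); first by rewrite (passes_mono vw pv).
  by case: (passes D w) => //; rewrite leqNgt -sincere.
Qed.

Lemma iter_phi_fixed x m : injective uA -> #|X| <= m.+1 -> f (iter m f x) = iter m f x.
Proof.
move=> uA_inj cardX.
have [i [j neq_ij eq_ij]] :
    exists (i : 'I_m.+2), exists2 j : 'I_m.+2, i != j & iter i f x = iter j f x.
  apply/injectivePn; apply: contraTN cardX => /injectiveP/leq_card.
  by rewrite card_ord -ltnNge.
wlog lt_ij : i j neq_ij eq_ij / i < j.
  move=> wlog_ij; case: (ltngtP i j) => [|lt_ji|/val_inj eq]; first exact: wlog_ij.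
    by apply: (wlog_ij j i); rewrite 1?eq_sym.
  by rewrite eq eqxx in neq_ij.
have fix_i : f (iter i f x) = iter i f x.
  apply: uA_inj; apply/eqP; rewrite eqn_leq phi_ge andbT {2}eq_ij.
  exact: (iter_phi_mono x lt_ij).
have le_im : i <= m by rewrite -ltnS (leq_trans lt_ij) // -ltnS.
by rewrite -(subnK le_im) iterD (iter_fix _ fix_i).
Qed.

Lemma sincere_vote_pivotal (v : 'I_n -> bool) p q :
  (forall i, v i = (u i q < u i p)) ->
  forall i, (u i q < u i p -> v i) /\ (u i p < u i q -> ~~ v i).
Proof. by move=> sincere i; rewrite sincere -leqNgt; split=> // /ltnW. Qed.

Hypothesis u_inj : forall i, injective (u i).

Section PivotalVote.

Variables (v : 'I_n -> bool) (p q : X).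
Hypothesis pivotal : forall i, (u i q < u i p -> v i) /\ (u i p < u i q -> ~~ v i).

Lemma pivotal_vote_Mset : Mset u D q (if passes D v then p else q).
Proof.
case: (eqVneq p q) => [-> | neq_pq]; first by rewrite if_same Mset_refl.
case: (passesP v) => [[C CD allv] | _]; last exact: Mset_refl.
apply/MsetP; right; exists C => // i /allv vi.
have neq_ui : u i q != u i p by apply: contra_neq neq_pq => /u_inj.
by rewrite ltn_neqAle neq_ui leqNgt; apply: contraL vi => /(proj2 (pivotal i)).
Qed.

Lemma pivotal_vote_passes : Mset u D q p -> (if passes D v then p else q) = p.
Proof.
case/MsetP => [-> | [C CD lt]]; first by rewrite if_same.
suff -> : passes D v by [].
by apply/passesP; exists C => // i /lt/(proj1 (pivotal i)).
Qed.

End PivotalVote.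

End Preferences.

Section Game.

Variables (n : nat) (X : finType) (uA : X -> nat) (u : 'I_n -> X -> nat).
Variables (D : {set {set 'I_n}}) (Xf : history X -> {set proposal X}) (T : nat) (x0 : X).

Local Notation f := (phi uA u D).

Definition accept_outcome k (a : proposal X) : X := if a.2 then a.1 else iter k f a.1.

(* With k rounds left after this one, amending to phi(x) ends at
   phi^k(phi x) = phi^(k+1)(x); where amending is not allowed, richness allows
   adjourning at phi^(k+1)(x) directly. *)
Definition best_proposal : setter_strategy X := fun h =>
  let x := dflt x0 h in
  if (f x, false) \in Xf h then (f x, false) else (f (iter (T - size h).-1 f x), true).

Definition propose_at (sA : setter_strategy X) h0 a0 : setter_strategy X :=
  fun h => if h == h0 then a0 else sA h.

Definition phi_predicts (R : X -> X -> Prop) sA (sV : voter_strategies n X) k :=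
  forall h, valid Xf h -> size h + k = T ->
  R (outD D x0 sA sV k h) (iter k f (dflt x0 h)).

Lemma rounds_left (h : history X) k : size h + k.+1 = T -> T - size h = k.+1.
Proof. by move=> <-; rewrite addKn. Qed.

Lemma rounds_exist (h : history X) : size h < T -> exists k, size h + k.+1 = T.
Proof. by move=> lt_hT; exists (T - size h).-1; rewrite prednK ?subn_gt0 // subnKC // ltnW. Qed.

Lemma rounds_lt (h : history X) k : size h + k.+1 = T -> size h < T.
Proof. by move=> <-; rewrite addnS ltnS leq_addr. Qed.

Lemma dflt_rcons h (e : entry X) : dflt x0 (rcons h e) = if e.2 then e.1.1 else dflt x0 h.
Proof. by rewrite /dflt foldl_rcons. Qed.

Lemma outV_split sA sV k h a :
  outV D x0 sA sV k h a =
  if passes D (fun i => sV i h a)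
  then (if a.2 then a.1 else outD D x0 sA sV k (rcons h (a, true)))
  else outD D x0 sA sV k (rcons h (a, false)).
Proof. by rewrite /outV; case: (passes _ _); case: a.2. Qed.

Lemma outD_S sA sV k h : outD D x0 sA sV k.+1 h = outV D x0 sA sV k h (sA h).
Proof. by []. Qed.

Lemma outD_agree sA sA' sV m k h :
  (forall h', m <= size h' -> sA h' = sA' h') -> m <= size h ->
  outD D x0 sA sV k h = outD D x0 sA' sV k h.
Proof.
move=> agree; elim: k h => [//|k IHk] h le_mh /=.
by rewrite -agree // IHk // size_rcons ltnW.
Qed.

Lemma outD_propose_at sA sV k h a :
  outD D x0 (propose_at sA h a) sV k.+1 h = outV D x0 sA sV k h a.
Proof.
have at_h : propose_at sA h a h = a by rewrite /propose_at eqxx.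
rewrite /= at_h /outV (@outD_agree _ sA _ (size h).+1) ?size_rcons //.
by move=> h' lt_hh'; rewrite /propose_at; case: eqP => // eq_h; rewrite eq_h ltnn in lt_hh'.
Qed.

Lemma propose_at_feasible sA h a :
  feasibleA Xf sA -> a \in Xf h -> feasibleA Xf (propose_at sA h a).
Proof. by move=> feas Xa h' vh'; rewrite /propose_at; case: eqP => [-> | _]; last apply: feas. Qed.

Lemma children_predicted (R : X -> X -> Prop) sA sV k h a :
  (forall x, R x x) -> phi_predicts R sA sV k ->
  valid Xf h -> size h + k.+1 = T -> a \in Xf h ->
  R (if a.2 then a.1 else outD D x0 sA sV k (rcons h (a, true))) (accept_outcome k a) /\
  R (outD D x0 sA sV k (rcons h (a, false))) (iter k f (dflt x0 h)).
Proof.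
move=> Rrefl pred vh size_h Xa.
have size_child b : size (rcons h (a, b)) + k = T by rewrite size_rcons addSnnS.
split; last first.
  have vf : valid Xf (rcons h (a, false)) by apply: valid_rcons.
  by have := pred _ vf (size_child false); rewrite dflt_rcons.
rewrite /accept_outcome; case a2: a.2; first exact: Rrefl.
have vt : valid Xf (rcons h (a, true)) by apply: valid_rcons; rewrite ?a2.
by have := pred _ vt (size_child true); rewrite dflt_rcons.
Qed.

Lemma outV_predicted (R : X -> X -> Prop) sA sV k h a :
  (forall x, R x x) -> phi_predicts R sA sV k ->
  valid Xf h -> size h + k.+1 = T -> a \in Xf h ->
  R (outV D x0 sA sV k h a)
    (if passes D (fun i => sV i h a) then accept_outcome k a else iter k f (dflt x0 h)).
Proof.
move=> Rrefl pred vh size_h Xa; rewrite outV_split.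
have [Rp Rf] := children_predicted Rrefl pred vh size_h Xa.
by case: (passes _ _).
Qed.

Hypotheses (gen : gen_amendment Xf) (rich_Xf : rich Xf).
Hypothesis u_inj : forall i, injective (u i).

Lemma amend_or_adjourn h (y1 y2 : X) : (y1, false) \in Xf h \/ (y2, true) \in Xf h.
Proof.
have [[] Xy1] := gen h y1; last by left.
have [b Xy2] := gen h y2; right.
case: (rich_Xf h) => /subsetP sub; first by have := sub _ Xy1; rewrite inE.
by have := sub _ Xy2; rewrite inE /= => b_true; rewrite -b_true.
Qed.

Lemma best_proposal_feasible : feasibleA Xf best_proposal.
Proof.
move=> h _; rewrite /best_proposal; case: ifP => // /negbT nXf.
by have [/(negP nXf) | //] :=
  amend_or_adjourn h (f (dflt x0 h)) (f (iter (T - size h).-1 f (dflt x0 h))).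
Qed.

Lemma accept_best_proposal k h :
  size h + k.+1 = T -> accept_outcome k (best_proposal h) = f (iter k f (dflt x0 h)).
Proof.
move=> /rounds_left rounds; rewrite /best_proposal rounds /=.
by case: ifP => _; rewrite /accept_outcome //= -iterSr.
Qed.

Section Uniqueness.

Variables (sA : setter_strategy X) (sV : voter_strategies n X).
Hypothesis uA_inj : injective uA.
Hypothesis eqm : is_equilibrium uA u D Xf T x0 sA sV.

Lemma equilibrium_vote k h a :
  phi_predicts eq sA sV k -> valid Xf h -> size h + k.+1 = T -> a \in Xf h ->
  let z := iter k f (dflt x0 h) in
  Mset u D z (outV D x0 sA sV k h a) /\
  (Mset u D z (accept_outcome k a) -> outV D x0 sA sV k h a = accept_outcome k a).
Proof.
move=> pred vh size_h Xa z.
have size_lt := rounds_lt size_h.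
have [_ [_ voting]] := eqm; have [_ [_ pivotal]] := voting h a vh size_lt Xa.
have [po fo] := children_predicted (@erefl X) pred vh size_h Xa.
move: pivotal; rewrite (rounds_left size_h) /= po fo => pivotal.
rewrite (outV_predicted (@erefl X) pred vh size_h Xa).
by split; [apply: pivotal_vote_Mset | apply: pivotal_vote_passes].
Qed.

Lemma equilibrium_predicted k : phi_predicts eq sA sV k.
Proof.
elim: k => [|k IHk] h vh size_h //.
have size_lt := rounds_lt size_h.
have [feasA [deciding _]] := eqm; have [best_opt _] := deciding h vh size_lt.
have Xbest := best_proposal_feasible vh.
have [Mout _] := equilibrium_vote IHk vh size_h (feasA h vh).
have [_ pass_best] := equilibrium_vote IHk vh size_h Xbest.
rewrite (accept_best_proposal size_h) in pass_best.
have := best_opt _ (propose_at_feasible feasA Xbest).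
rewrite (rounds_left size_h) outD_propose_at (pass_best (phi_in _ _ _ _)) => le_best.
apply: uA_inj; apply/eqP; rewrite eqn_leq le_best andbT.
exact: phi_max Mout.
Qed.

End Uniqueness.

Definition sincere_voters : voter_strategies n X := fun i h a =>
  u i (iter (T - size h).-1 f (dflt x0 h)) < u i (accept_outcome (T - size h).-1 a).

Lemma sincere_voters_at k h a i :
  size h + k.+1 = T ->
  sincere_voters i h a = (u i (iter k f (dflt x0 h)) < u i (accept_outcome k a)).
Proof. by move=> /rounds_left rounds; rewrite /sincere_voters rounds. Qed.

Lemma sincere_vote_best k h :
  size h + k.+1 = T ->
  (if passes D (fun i => sincere_voters i h (best_proposal h))
   then accept_outcome k (best_proposal h) else iter k f (dflt x0 h))
  = f (iter k f (dflt x0 h)).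
Proof.
move=> size_h; rewrite -(accept_best_proposal size_h).
apply: (pivotal_vote_passes (u := u)); last by rewrite (accept_best_proposal size_h) phi_in.
by apply: sincere_vote_pivotal => i; apply: sincere_voters_at.
Qed.

Lemma sincere_predicted k : phi_predicts eq best_proposal sincere_voters k.
Proof.
elim: k => [|k IHk] h vh size_h //.
rewrite outD_S (outV_predicted (@erefl X) IHk vh size_h (best_proposal_feasible vh)).
exact: sincere_vote_best.
Qed.

Lemma setter_cannot_improve sA' k :
  feasibleA Xf sA' -> phi_predicts (fun y z => uA y <= uA z) sA' sincere_voters k.
Proof.
move=> feas'; elim: k => [|k IHk] h vh size_h //.
rewrite outD_S; apply: leq_trans (outV_predicted _ IHk vh size_h (feas' h vh)) _ => //.
apply/phi_max/(pivotal_vote_Mset (u := u)) => //.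
by apply: sincere_vote_pivotal => i; apply: sincere_voters_at.
Qed.

Lemma voter_cannot_improve i s k :
  phi_predicts (fun y z => u i y <= u i z) best_proposal (dev sincere_voters i s) k.
Proof.
elim: k => [|k IHk] h vh size_h //.
rewrite outD_S.
apply: leq_trans (outV_predicted _ IHk vh size_h (best_proposal_feasible vh)) _ => //.
rewrite iterS -(sincere_vote_best size_h); apply: sincere_vote_optimal.
  exact: sincere_voters_at.
by move=> j /negPf neq_ji; rewrite /dev neq_ji.
Qed.

Lemma best_sincere_equilibrium : is_equilibrium uA u D Xf T x0 best_proposal sincere_voters.
Proof.
split; first exact: best_proposal_feasible.
split => [h vh /rounds_exist[k size_h] | h a vh /rounds_exist[k size_h] Xa];
  rewrite (rounds_left size_h) ?succnK.
  rewrite (sincere_predicted vh size_h).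
  split => [sA' feas' | i s]; [exact: setter_cannot_improve | exact: voter_cannot_improve].
have [po fo] := children_predicted (@erefl X) (sincere_predicted (k := k)) vh size_h Xa.
rewrite (outV_predicted (@erefl X) (sincere_predicted (k := k)) vh size_h Xa).
split; [|split] => [sA' feas' | i s | i].
- exact: outV_predicted _ (setter_cannot_improve (k := k) feas') vh size_h Xa.
- apply: leq_trans (outV_predicted _ (voter_cannot_improve i s (k := k)) vh size_h Xa) _ => //.
  apply: sincere_vote_optimal; first exact: sincere_voters_at.
  by move=> j /negPf neq_ji; rewrite /dev neq_ji.
- rewrite po fo; apply: (sincere_vote_pivotal (v := fun j => sincere_voters j h a)) => j.
  exact: sincere_voters_at.
Qed.

End Game.

Theorem theorem7 (n : nat) (X : finType) (uA : X -> nat) (u : 'I_n -> X -> nat)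
  (D : {set {set 'I_n}}) (Xf : history X -> {set proposal X}) :
  0 < n ->
  injective uA -> (forall i, injective (u i)) ->
  gen_amendment Xf -> rich Xf ->
  (forall (T : nat) (x0 : X),
     (exists sA sV, is_equilibrium uA u D Xf T x0 sA sV) /\
     (forall sA sV, is_equilibrium uA u D Xf T x0 sA sV ->
        eq_outcome D T x0 sA sV = iter T (phi uA u D) x0)) /\
  (forall T : nat, #|X|.-1 <= T ->
     forall x : X,
       (exists x0 sA sV, is_equilibrium uA u D Xf T x0 sA sV /\ eq_outcome D T x0 sA sV = x)
       <-> x \in E_D uA u D).
Proof.
move=> _ uA_inj u_inj gen rich_Xf.
have outcome T x0 sA sV : is_equilibrium uA u D Xf T x0 sA sV ->
    eq_outcome D T x0 sA sV = iter T (phi uA u D) x0.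
  by move=> eqm; apply: (equilibrium_predicted gen rich_Xf u_inj uA_inj eqm (valid_nil Xf)).
have best_eq T x0 := best_sincere_equilibrium uA D T x0 gen rich_Xf u_inj.
split=> [T x0 | T le_XT x]; first by split; [do 2 eexists; apply: best_eq | apply: outcome].
split=> [[x0 [sA [sV [eqm <-]]]] | /eqP fix_x].
  rewrite (outcome _ _ _ _ eqm); apply/eqP/iter_phi_fixed => //.
  by rewrite -ltnS in le_XT; apply: leq_trans le_XT; rewrite leqSpred.
by exists x; do 2 eexists; split; [apply: best_eq | rewrite outcome // iter_fix].
Qed.
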